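(* Let $\Gamma$ be a graph on vertex set $[n]$, let $r\in\mathbb{N}$, and suppose $\Gamma$ contains a spanning subgraph $A$ which is an $r$-flower (with respect to the host graph $\Gamma$), with sets $V^1,\dots,V^{r+1}$ as in the definition. Then $A$ is $C_4$-saturated in $\Gamma$ and $$ |E(A)|=|E(A[V^{r+1}])|+\frac{3}{2}\left(n-|V^{r+1}|-r\right)+3\left(|V^2|+\ldots+|V^{r+1}|\right). $$
   Context: For a graph $A$ and $V\subseteq V(A)$, $A[V]$ is the induced subgraph and $N_{A}(v)$ the neighbourhood of $v$. A spanning subgraph $A$ of $\Gamma$ is $C_4$-saturated in $\Gamma$ if $A$ contains no copy of the $4$-cycle $C_4$ but adding to $A$ any edge of $\Gamma$ not in $A$ creates a copy of $C_4$. Let $A\subseteq\Gamma$ be a graph on $[n]$ and $r\in\mathbb{N}$. $A$ is an $r$-flower if there exist sets $V^{1},\dots,V^{r+1}$ and, for each $i\in[r]$, sets $R_i,V^i_1,V^i_2,V^i_3$ such that: (1) $V^1=[n]$ and for every $\ell\in[r]$, $V^\ell$ is the disjoint union of $V^{r+1}$ and the sets $V^i_1,V^i_2,V^i_3,R_i$ for $i=\ell,\dots,r$; (2) for every $i\in[r]$, $R_i=\{v^i_1,v^i_2,v^i_3\}$ consists of three pairwise adjacent (in $A$) vertices; (3) for every $i\in[r]$, $j\in\{1,2,3\}$, $N_{A[V^i]}(v^i_j)\setminus R_i=V^i_j$; (4) for every $i\in[r]$, $j\in\{1,2,3\}$ there is a partition $V^i_j=W^i_j\sqcup U^i_j\sqcup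 Y^i_j$ such that (4.1) the edges of $A[W^i_j\sqcup V^{i+1}]$ not in $A[V^{i+1}]$ form a perfect matching between $W^i_j$ and $V^{i+1}$, (4.2) the edges of $A[W^i_j\sqcup U^i_j]$ form a perfect matching between $W^i_j$ and $U^i_j$, (4.3) the edges of $A[Y^i_j]$ form a perfect matching of $Y^i_j$; (5) $A[V^{r+1}]$ is an inclusion-maximal $C_4$-free graph, i.e. $C_4$-saturated in $\Gamma[V^{r+1}]$; (6) $A$ has no edges other than those described in (2)–(5). *)

From mathcomp Require Import all_boot all_order all_algebra.
Set Implicit Arguments. Unset Strict Implicit. Unset Printing Implicit Defensive.
Import GRing.Theory Num.Theory.

Section Graphs.
Variable T : finType.

Definition simple_graph (G : rel T) : Prop :=
  (forall x y, G x y = G y x) /\ (forall x, ~~ G x x).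

(* induced subgraph G[S] (vertices outside S become isolated) *)
Definition induced (G : rel T) (S : {set T}) : rel T :=
  fun x y => [&& G x y, x \in S & y \in S].

Definition add_edge (G : rel T) (x y : T) : rel T :=
  fun a b => G a b || ((a == x) && (b == y)) || ((a == y) && (b == x)).

Definition has_C4 (G : rel T) : Prop :=
  exists a b c d : T, [/\ uniq [:: a; b; c; d],
    G a b, G b c, G c d & G d a].

Definition C4_saturated_in (G A : rel T) : Prop :=
  [/\ (forall x y, A x y -> G x y),
      ~ has_C4 A &
      (forall x y, G x y -> ~~ A x y -> has_C4 (add_edge A x y))].

Definition disjoint_union (S : {set T}) (s : seq {set T}) : Prop :=
  S = \bigcup_(X <- s) X /\
  (forall a b, a < b < size s -> [disjoint nth set0 s a & nth set0 s b]).

Definition pm_between (F : rel T) (X Y : {set T}) : Prop :=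
  (forall x y, F x y -> ((x \in X) && (y \in Y)) || ((x \in Y) && (y \in X))) /\
  (forall x, x \in X :|: Y -> #|[set y | F x y]| = 1).

Definition pm_of (F : rel T) (X : {set T}) : Prop :=
  (forall x y, F x y -> (x \in X) && (y \in X)) /\
  (forall x, x \in X -> #|[set y | F x y]| = 1).

(* number of edges of a graph on T, via an injection into nat for ordering:
   we count unordered pairs using ordered pairs (x, y) with enum_rank x < enum_rank y *)
Definition nedges (G : rel T) : nat :=
  #|[set p : T * T | (enum_rank p.1 < enum_rank p.2)%N && G p.1 p.2]|.

End Graphs.

Section Flower.
Variable n : nat.
Local Notation V_t := 'I_n.

(* Data: levels i = 1..r (as nats), j : 'I_3 indexes j in {1,2,3}. *)
Definition Rset (v : nat -> 'I_3 -> V_t) (i : nat) : {set V_t} :=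
  [set v i (inord 0); v i (inord 1); v i (inord 2)].

(* parts of V^l in condition (1): V^{r+1}, and R_i, V^i_1, V^i_2, V^i_3 for l <= i <= r *)
Definition level_parts (r : nat) (V : nat -> {set V_t}) (v : nat -> 'I_3 -> V_t)
  (Vs : nat -> 'I_3 -> {set V_t}) (l : nat) : seq {set V_t} :=
  V r.+1 :: flatten [seq [:: Rset v i; Vs i (inord 0); Vs i (inord 1); Vs i (inord 2)]
                    | i <- iota l (r.+1 - l)].

Definition cross_edges (A : rel V_t) (W Vn : {set V_t}) : rel V_t :=
  fun x y => induced A (W :|: Vn) x y && ~~ ((x \in Vn) && (y \in Vn)).

Definition is_flower_with (G A : rel V_t) (r : nat) (V : nat -> {set V_t}) : Prop :=
  exists (v : nat -> 'I_3 -> V_t) (Vs W U Y : nat -> 'I_3 -> {set V_t}),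
  [/\
   V 1%N = [set: V_t] /\
     (forall l, (1 <= l <= r)%N -> disjoint_union (V l) (level_parts r V v Vs l)),
   (forall i, (1 <= i <= r)%N -> forall j k : 'I_3, j != k -> A (v i j) (v i k)),
   (forall i, (1 <= i <= r)%N -> forall j : 'I_3,
      [set x in V i | A (v i j) x] :\: Rset v i = Vs i j),
   ((forall i, (1 <= i <= r)%N -> forall j : 'I_3,
      [/\ disjoint_union (Vs i j) [:: W i j; U i j; Y i j],
          pm_between (cross_edges A (W i j) (V i.+1)) (W i j) (V i.+1),
          pm_between (induced A (W i j :|: U i j)) (W i j) (U i j)
        & pm_of (induced A (Y i j)) (Y i j)]) /\
   C4_saturated_in (induced G (V r.+1)) (induced A (V r.+1))) &
   (forall x y, A x y ->
      [\/ exists i (j k : 'I_3), [/\ (1 <= i <= r)%N, x = v i j & y = v i k],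
          exists i (j : 'I_3), (1 <= i <= r)%N /\
             ((x = v i j /\ y \in Vs i j) \/ (y = v i j /\ x \in Vs i j)),
          exists i (j : 'I_3), (1 <= i <= r)%N /\
             [\/ cross_edges A (W i j) (V i.+1) x y,
                 induced A (W i j :|: U i j) x y
               | induced A (Y i j) x y]
        | induced A (V r.+1) x y])].

End Flower.

(* Peel the flower one level at a time.  For 1 <= l <= r, V^l is V^{l+1} together with
   the three stars {v^l_j} U V^l_j, and inside A[V^l] a petal vertex is adjacent only to its
   centre and to at most two matching partners, while a vertex of V^{l+1} gains exactly one
   neighbour in each W^l_j.  Hence a 4-cycle of A[V^l] cannot pass through a vertex outside
   V^{l+1}, and a non-edge of Gamma[V^l] leaving V^{l+1} is closed by a path of length three
   through the triangle or the matchings; downward induction on l reduces C4-freeness and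
   saturation to A[V^{r+1}].  For the count, the degrees in A[V^l] are deg_{l+1} + 3 on
   V^{l+1}, 2 + |V^l_j| at v^l_j, 3 on W^l_j and 2 on U^l_j and Y^l_j; since
   |W^l_j| = |U^l_j| = |V^{l+1}| this gives 2e(A[V^l]) + 3 = 2e(A[V^{l+1}]) + 3|V^l| + 3|V^{l+1}|,
   which telescopes to the formula. *)

From mathcomp Require Import all_boot all_order all_algebra.
From mathcomp Require Import zify lra.
Set Implicit Arguments. Unset Strict Implicit. Unset Printing Implicit Defensive.

Section FiniteSets.
Variable T : finType.
Implicit Types (X Y Z : {set T}) (s : seq {set T}).

Lemma disjoint_setsP X Y :
  reflect (forall x, x \in X -> x \in Y -> False) [disjoint X & Y].
Proof.
apply: (iffP idP) => [d x xX xY | h]; first by move/disjointFr: d => /(_ x xX); rewrite xY.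
by apply/pred0P => x /=; apply/negbTE/andP => -[/h].
Qed.

Lemma cardsU_disjoint X Y : [disjoint X & Y] -> #|X :|: Y| = #|X| + #|Y|.
Proof. by move=> d; rewrite cardsU disjoint_setI0 // cards0 subn0. Qed.

Lemma big_setU_disjoint (F : T -> nat) X Y : [disjoint X & Y] ->
  \sum_(x in X :|: Y) F x = \sum_(x in X) F x + \sum_(x in Y) F x.
Proof. by move=> d; rewrite -bigU //; apply: eq_bigl => x; rewrite in_setU. Qed.

Lemma sum_bigcup_disjoint (I : finType) (F : I -> {set T}) (E : T -> nat) :
  (forall i j, i != j -> [disjoint F i & F j]) ->
  \sum_(x in \bigcup_i F i) E x = \sum_i \sum_(x in F i) E x.
Proof. exact: partition_disjoint_bigcup. Qed.

Lemma card_bigcup_disjoint (I : finType) (F : I -> {set T}) :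
  (forall i j, i != j -> [disjoint F i & F j]) -> #|\bigcup_i F i| = \sum_i #|F i|.
Proof.
by move=> dis; rewrite -sum1_card sum_bigcup_disjoint //; apply: eq_bigr => i _; rewrite sum1_card.
Qed.

Lemma mem_bigcup_seq s x : (x \in \bigcup_(X <- s) X) = has (fun X => x \in X) s.
Proof. by elim: s => [|X s IH]; rewrite ?big_nil ?in_set0 // big_cons in_setU IH. Qed.

Lemma disjoint_union_nthF X s a b x : disjoint_union X s -> a != b ->
  a < size s -> b < size s -> x \in nth set0 s a -> x \in nth set0 s b -> False.
Proof.
move=> [_ dis] + ha hb xa xb; case: (ltngtP a b) => // hab _.
- by move/disjointFr: (dis a b (introT andP (conj hab hb))) => /(_ x xa); rewrite xb.
- by move/disjointFr: (dis b a (introT andP (conj hab ha))) => /(_ x xb); rewrite xa.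
Qed.

Lemma card_set1_uniq (P : pred T) y z : #|[set x | P x]| = 1 -> P y -> P z -> y = z.
Proof.
move/eqP/cards1P => [a /setP ea] Py Pz.
by move: (ea y) (ea z); rewrite !inE Py Pz => /esym/eqP -> /esym/eqP ->.
Qed.

Lemma card_set1_ex (P : pred T) : #|[set x | P x]| = 1 -> exists y, P y.
Proof. by move/eqP/cards1P => [a /setP/(_ a)]; rewrite !inE eqxx; exists a. Qed.

Lemma card_rel (P : rel T) : #|[set p : T * T | P p.1 p.2]| = \sum_x #|[set y | P x y]|.
Proof.
have count_true (I : finType) (Q : pred I) : #|[set x | Q x]| = \sum_x (Q x : nat).
  by rewrite -sum1_card big_mkcond; apply: eq_bigr => x _; rewrite inE; case: (Q x).
rewrite (count_true _ (fun p => P p.1 p.2)).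
rewrite -(pair_big xpredT xpredT (fun x y => (P x y : nat))) /=.
by apply: eq_bigr => x _; rewrite count_true.
Qed.

End FiniteSets.

Section Relations.
Variable T : finType.
Implicit Types (X Y : {set T}).

Lemma nedges_double (B : rel T) : symmetric B -> irreflexive B ->
  (nedges B).*2 = #|[set p : T * T | B p.1 p.2]|.
Proof.
move=> Bsym Birr.
set S1 := [set p : T * T | (enum_rank p.1 < enum_rank p.2)%N && B p.1 p.2].
set S2 := [set p : T * T | (enum_rank p.2 < enum_rank p.1)%N && B p.1 p.2].
have -> : [set p : T * T | B p.1 p.2] = S1 :|: S2.
  apply/setP => [[x y]]; rewrite !inE /=; case Bxy: (B x y); rewrite ?andbF // !andbT.
  case: (ltngtP (enum_rank x) (enum_rank y)) => // /val_inj /enum_rank_inj exy.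
  by rewrite exy Birr in Bxy.
have -> : S2 = [set (p.2, p.1) | p in S1].
  apply/setP => [[x y]]; rewrite !inE /=; apply/idP/imsetP.
  - by move=> h; exists (y, x); rewrite // inE /= Bsym.
  - by move=> [[a b]]; rewrite inE /= Bsym => h [-> ->].
rewrite cardsU_disjoint ?card_imset ?addnn // => [[a b] [c d] /= [-> ->] //|].
apply/disjoint_setsP => -[x y] + /imsetP[[a b] + [ex ey]]; rewrite !inE /= ex ey.
by move=> /andP[? _] /andP[? _]; lia.
Qed.

Lemma pm_between_card (F : rel T) X Y : symmetric F -> pm_between F X Y ->
  [disjoint X & Y] -> #|X| = #|Y|.
Proof.
move=> Fsym [Fin Fcard] /disjoint_setsP dXY.
have matched (Z : {set T}) :
    Z \subset X :|: Y -> #|[set p : T * T | (p.1 \in Z) && F p.1 p.2]| = #|Z|.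
  move=> sZ; rewrite (card_rel (fun x y => (x \in Z) && F x y)) -[#|Z|]sum1_card.
  rewrite [RHS]big_mkcond; apply: eq_bigr => x _; case: ifP => xZ.
    by rewrite -(Fcard x (subsetP sZ x xZ)); apply: eq_card => y; rewrite !inE.
  by apply/eqP; rewrite cards_eq0; apply/eqP/setP => y; rewrite !inE.
rewrite -(matched X) ?subsetUl // -(matched Y) ?subsetUr //.
rewrite -(card_imset _ (can_inj (@swap_pairK T T))); apply: eq_card => -[a b].
rewrite [in RHS]inE /=; apply/imsetP/idP.
- move=> [[c d]]; rewrite inE /= => /andP[cX Fcd] [-> ->]; rewrite Fsym Fcd andbT.
  by case/orP: (Fin _ _ Fcd) => /andP[] // /(dXY c cX).
- move=> /andP[aY Fab]; exists (b, a) => //; rewrite inE /= Fsym Fab andbT.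
  by case/orP: (Fin _ _ Fab) => /andP[] // /dXY /(_ aY).
Qed.

Lemma pm_between_uniq (F : rel T) X Y x y z : pm_between F X Y -> F x y -> F x z -> y = z.
Proof.
move=> [Fin Fcard] Fxy Fxz; apply: (card_set1_uniq (Fcard x _) Fxy Fxz).
by rewrite in_setU; case/orP: (Fin _ _ Fxy) => /andP[-> _]; rewrite ?orbT.
Qed.

Lemma pm_between_ex (F : rel T) X Y x : pm_between F X Y -> x \in X :|: Y -> exists y, F x y.
Proof. by move=> [_ Fcard] /Fcard; apply: card_set1_ex. Qed.

Lemma pm_of_uniq (F : rel T) X x y z : pm_of F X -> F x y -> F x z -> y = z.
Proof.
move=> [Fin Fcard] Fxy Fxz; apply: (card_set1_uniq (Fcard x _) Fxy Fxz).
by case/andP: (Fin _ _ Fxy).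
Qed.

Lemma pm_of_ex (F : rel T) X x : pm_of F X -> x \in X -> exists y, F x y.
Proof. by move=> [_ Fcard] /Fcard; apply: card_set1_ex. Qed.

End Relations.

Lemma size_flatten_uniform (T : Type) k (f : nat -> seq T) s :
  (forall i, size (f i) = k) -> size (flatten (map f s)) = k * size s.
Proof.
move=> fk; elim: s => [|i s IH] /=; first by rewrite muln0.
by rewrite size_cat IH fk mulnS.
Qed.

Lemma nth_flatten_uniform (T : Type) (x0 : T) k (f : nat -> seq T) s a c :
  (forall i, size (f i) = k) -> a < size s -> c < k ->
  nth x0 (flatten (map f s)) (k * a + c) = nth x0 (f (nth 0 s a)) c.
Proof.
move=> fk; elim: s a => [|i s IH] [|a] //= ha hc; rewrite nth_cat fk.
  by rewrite muln0 hc.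
by rewrite mulnS -addnA ltnNge leq_addr /= addKn; apply: IH.
Qed.

Lemma downward_ind (r : nat) (P : nat -> Prop) :
  P r.+1 -> (forall l, 1 <= l <= r -> P l.+1 -> P l) -> P 1.
Proof.
move=> Ptop Pstep; suff Pk k : k <= r -> P (r.+1 - k) by rewrite -(subSnn r); apply: Pk.
elim: k => [|k IH] hk; first by rewrite subn0.
by rewrite subSS; apply: Pstep; [lia | rewrite -subSn; [apply: IH|]; lia].
Qed.

Lemma uniq4 (T : eqType) (a b c d : T) : uniq [:: a; b; c; d] =
  [&& a != b, a != c, a != d, b != c, b != d & c != d].
Proof. by rewrite /= !inE !negb_or andbT -!andbA. Qed.

Lemma ord3_cover (j k m t : 'I_3) : j != k -> j != m -> k != m -> [\/ t = j, t = k | t = m].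
Proof.
by case: j k m t => [[|[|[|?]]] ?] [[|[|[|?]]] ?] [[|[|[|?]]] ?] [[|[|[|?]]] ?] //=;
  rewrite -?val_eqE //= => _ _ _; by [constructor 1; apply: val_inj
  | constructor 2; apply: val_inj | constructor 3; apply: val_inj].
Qed.

Lemma ord3_third (j k : 'I_3) : j != k -> exists m, m != j /\ m != k.
Proof.
move=> jk; suff /existsP[m /andP[]] : [exists m : 'I_3, (m != j) && (m != k)] by exists m.
by move: jk; case: j k => [[|[|[|?]]] ?] [[|[|[|?]]] ?] //= _; apply/existsP;
  [exists (inord 2) | exists (inord 1) | exists (inord 2)
  | exists (inord 0) | exists (inord 1) | exists (inord 0)]; rewrite -!val_eqE /= inordK.
Qed.

Lemma uniq_rot4 (T : eqType) (a b c d : T) : uniq [:: a; b; c; d] -> uniq [:: b; c; d; a].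
Proof. by move=> u; rewrite -(rot_uniq 1) in u. Qed.

Section C4.
Variable T : finType.
Implicit Types R : rel T.

Lemma has_C4_sub R1 R2 : subrel R1 R2 -> has_C4 R1 -> has_C4 R2.
Proof. by move=> sub [a [b [c [d [u h1 h2 h3 h4]]]]]; exists a, b, c, d; split; auto. Qed.

Lemma add_edgeC R x y : subrel (add_edge R x y) (add_edge R y x).
Proof. by move=> a b; rewrite /add_edge -!orbA [(a == x) && _ || _]orbC. Qed.

Lemma add_edge_C4 R x a b y : R x a -> R a b -> R b y -> uniq [:: x; a; b; y] ->
  has_C4 (add_edge R x y).
Proof.
by move=> xa ab b_y u; exists x, a, b, y; split; rewrite /add_edge ?xa ?ab ?b_y ?eqxx ?orbT.
Qed.

End C4.

(** * The levels of a flower *)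

Section Flower.
Variables (n : nat) (G A : rel 'I_n) (r : nat) (V : nat -> {set 'I_n}).
Variables (v : nat -> 'I_3 -> 'I_n) (Vs W U Y : nat -> 'I_3 -> {set 'I_n}).
Hypothesis G_irr : forall x, ~~ G x x.
Hypothesis A_sym : symmetric A.
Hypothesis A_sub : forall x y, A x y -> G x y.
Hypothesis V1_full : V 1 = [set: 'I_n].
Hypothesis V_parts : forall l, 1 <= l <= r -> disjoint_union (V l) (level_parts r V v Vs l).
Hypothesis R_triangle : forall i, 1 <= i <= r -> forall j k : 'I_3, j != k -> A (v i j) (v i k).
Hypothesis centre_nbhd : forall i, 1 <= i <= r -> forall j : 'I_3,
  [set x in V i | A (v i j) x] :\: Rset v i = Vs i j.
Hypothesis petal_parts : forall i, 1 <= i <= r -> forall j : 'I_3,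
  [/\ disjoint_union (Vs i j) [:: W i j; U i j; Y i j],
      pm_between (cross_edges A (W i j) (V i.+1)) (W i j) (V i.+1),
      pm_between (induced A (W i j :|: U i j)) (W i j) (U i j)
    & pm_of (induced A (Y i j)) (Y i j)].
Hypothesis top_saturated : C4_saturated_in (induced G (V r.+1)) (induced A (V r.+1)).
Hypothesis A_edges : forall x y, A x y ->
  [\/ exists i (j k : 'I_3), [/\ 1 <= i <= r, x = v i j & y = v i k],
      exists i (j : 'I_3), 1 <= i <= r /\
         ((x = v i j /\ y \in Vs i j) \/ (y = v i j /\ x \in Vs i j)),
      exists i (j : 'I_3), 1 <= i <= r /\
         [\/ cross_edges A (W i j) (V i.+1) x y,
             induced A (W i j :|: U i j) x y
           | induced A (Y i j) x y]
    | induced A (V r.+1) x y].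

Definition level_chunk i := [:: Rset v i; Vs i (inord 0); Vs i (inord 1); Vs i (inord 2)].
Local Notation part i k := (nth set0 (level_chunk i) k).

Lemma level_partsE l :
  level_parts r V v Vs l = V r.+1 :: flatten (map level_chunk (iota l (r.+1 - l))).
Proof. by []. Qed.

Lemma size_level_parts l : size (level_parts r V v Vs l) = 1 + 4 * (r.+1 - l).
Proof. by rewrite level_partsE /= (size_flatten_uniform (k := 4)) // size_iota. Qed.

Lemma nth_level_parts l i k : l <= i <= r -> k < 4 ->
  nth set0 (level_parts r V v Vs l) (1 + 4 * (i - l) + k) = part i k.
Proof.
move=> hi hk; rewrite level_partsE -addnA /= nth_flatten_uniform ?size_iota //; last by lia.
by rewrite nth_iota ?subnKC //; lia.
Qed.

Lemma mem_V_parts l x : 1 <= l <= r.+1 -> (x \in V l) <->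
  (x \in V r.+1 \/ exists i k, [/\ l <= i <= r, k < 4 & x \in part i k]).
Proof.
case/andP=> l1; rewrite leq_eqVlt => /orP[/eqP-> | lr].
  by split=> [|[//|[i [k [hi _ _]]]]]; [left | lia].
have [-> _] := V_parts (l := l) (introT andP (conj l1 lr)); rewrite mem_bigcup_seq.
split=> [/(has_nthP set0)[[_ /= -> |m]]|]; first by left.
  rewrite size_level_parts => hm hx; right; exists (l + m %/ 4), (m %% 4).
  split; [lia | by rewrite ltn_mod |].
  rewrite -(nth_level_parts (l := l)) ?ltn_mod //; last by lia.
  by have := divn_eq m 4; have -> : 1 + 4 * (l + m %/ 4 - l) + m %% 4 = m.+1 by lia.
case=> [hx|[i [k [hi hk hx]]]]; apply/(has_nthP set0); first by exists 0.
by exists (1 + 4 * (i - l) + k); rewrite ?size_level_parts ?nth_level_parts //; lia.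
Qed.

Lemma part_unique i k i' k' x : 1 <= i <= r -> 1 <= i' <= r -> k < 4 -> k' < 4 ->
  x \in part i k -> x \in part i' k' -> i = i' /\ k = k'.
Proof.
move=> hi hi' hk hk' xp xp'.
case: (boolP ((i == i') && (k == k'))) => [/andP[/eqP -> /eqP ->] // | ne]; exfalso.
have hr : 1 <= 1 <= r by lia.
apply: (disjoint_union_nthF (V_parts hr) (a := 1 + 4 * (i - 1) + k)
  (b := 1 + 4 * (i' - 1) + k') _ _ _ (x := x)); rewrite ?size_level_parts ?nth_level_parts //;
  try lia; by apply/eqP; move: ne; rewrite negb_and => /orP[/eqP|/eqP]; lia.
Qed.

Lemma part_notin_top i k x : 1 <= i <= r -> k < 4 -> x \in part i k -> x \in V r.+1 -> False.
Proof.
move=> hi hk xp xt; have hr : 1 <= 1 <= r by lia.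
apply: (disjoint_union_nthF (V_parts hr) (a := 1 + 4 * (i - 1) + k) (b := 0) (x := x));
  rewrite ?size_level_parts ?nth_level_parts //; lia.
Qed.

Lemma V_decr l l' x : 1 <= l <= l' -> l' <= r.+1 -> x \in V l' -> x \in V l.
Proof.
move=> hl hl' hx; have hl1 : 1 <= l' <= r.+1 by lia.
have hl2 : 1 <= l <= r.+1 by lia.
apply/(mem_V_parts x hl2); case/(mem_V_parts x hl1): hx => [|[i [k [hi hk hx]]]]; first by left.
by right; exists i, k; split => //; lia.
Qed.

Lemma part_in_V i k x : 1 <= i <= r -> k < 4 -> x \in part i k -> x \in V i.
Proof.
move=> hi hk hx; have hi1 : 1 <= i <= r.+1 by lia.
by apply/(mem_V_parts x hi1); right; exists i, k; split => //; lia.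
Qed.

Lemma part_notin_Vnext i k x : 1 <= i <= r -> k < 4 -> x \in part i k -> x \in V i.+1 -> False.
Proof.
move=> hi hk hx; have hi1 : 1 <= i.+1 <= r.+1 by lia.
case/(mem_V_parts x hi1) => [|[i' [k' [hi' hk' hx']]]]; first exact: part_notin_top hx.
by have [] := part_unique hi (_ : 1 <= i' <= r) hk hk' hx hx'; lia.
Qed.

Lemma part_succ i (j : 'I_3) : part i j.+1 = Vs i j.
Proof. by case: j => [[|[|[|j]]] hj] //=; congr Vs; apply: val_inj; rewrite /= inordK. Qed.

Lemma mem_Rset i j : v i j \in Rset v i.
Proof.
have -> : j = inord j by apply: val_inj; rewrite /= inordK.
by rewrite !inE; case: j => [[|[|[|?]]] ?] //=; rewrite eqxx ?orbT.
Qed.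

Lemma RsetP i x : x \in Rset v i -> exists j, x = v i j.
Proof. by rewrite !inE -?orbA => /or3P [] /eqP ->; eexists. Qed.

Lemma V_level_cases l x : 1 <= l <= r -> x \in V l ->
  [\/ x \in V l.+1, x \in Rset v l | exists j, x \in Vs l j].
Proof.
move=> hl; have hl1 : 1 <= l <= r.+1 by lia.
case/(mem_V_parts x hl1) => [xt|[i [k [hi hk xp]]]].
  by constructor 1; apply: (V_decr _ _ xt); lia.
case: (ltngtP l i) => [li|il|eli]; [|lia|subst i].
  have hl2 : 1 <= l.+1 <= r.+1 by lia.
  by constructor 1; apply/(mem_V_parts x hl2); right; exists i, k; split => //; lia.
move: xp; case: k hk => [|k] hk xp; first by constructor 2.
by constructor 3; exists (Ordinal (hk : k < 3)); rewrite -part_succ.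
Qed.

Lemma R_in_V l x : 1 <= l <= r -> x \in Rset v l -> x \in V l.
Proof. by move=> hl; apply: (part_in_V (k := 0)). Qed.

Lemma Vs_in_V l j x : 1 <= l <= r -> x \in Vs l j -> x \in V l.
Proof. by move=> hl; rewrite -part_succ; apply: (part_in_V hl (ltn_ord j : j.+1 < 4)). Qed.

Lemma R_notin_Vnext l x : 1 <= l <= r -> x \in Rset v l -> x \in V l.+1 -> False.
Proof. by move=> hl; apply: (part_notin_Vnext (k := 0)). Qed.

Lemma Vs_notin_Vnext l j x : 1 <= l <= r -> x \in Vs l j -> x \in V l.+1 -> False.
Proof. by move=> hl; rewrite -part_succ; apply: (part_notin_Vnext hl (ltn_ord j : j.+1 < 4)). Qed.

Lemma R_notin_Vs l j x : 1 <= l <= r -> x \in Rset v l -> x \in Vs l j -> False.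
Proof.
move=> hl xR; rewrite -part_succ => xs.
by have [] := part_unique hl hl (isT : 0 < 4) (ltn_ord j : j.+1 < 4) xR xs.
Qed.

Lemma Vs_index_uniq l j j' x : 1 <= l <= r -> x \in Vs l j -> x \in Vs l j' -> j = j'.
Proof.
move=> hl; rewrite -part_succ -(part_succ _ j') => xs xs'.
by have [_ [/val_inj]] := part_unique hl hl (ltn_ord j : j.+1 < 4) (ltn_ord j' : j'.+1 < 4) xs xs'.
Qed.

Lemma petal_WUY l j : 1 <= l <= r -> Vs l j = W l j :|: U l j :|: Y l j.
Proof.
by move=> hl; have [[-> _] _ _ _] := petal_parts hl j; rewrite !big_cons big_nil setU0 setUA.
Qed.

Lemma W_in_Vs l j x : 1 <= l <= r -> x \in W l j -> x \in Vs l j.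
Proof. by move=> hl; rewrite petal_WUY // !inE => ->. Qed.

Lemma U_in_Vs l j x : 1 <= l <= r -> x \in U l j -> x \in Vs l j.
Proof. by move=> hl; rewrite petal_WUY // !inE => ->; rewrite orbT. Qed.

Lemma Y_in_Vs l j x : 1 <= l <= r -> x \in Y l j -> x \in Vs l j.
Proof. by move=> hl; rewrite petal_WUY // !inE => ->; rewrite orbT. Qed.

Lemma W_notin_U l j x : 1 <= l <= r -> x \in W l j -> x \in U l j -> False.
Proof.
move=> hl; have [du _ _ _] := petal_parts hl j.
exact: (disjoint_union_nthF (a := 0) (b := 1) du).
Qed.

Lemma W_notin_Y l j x : 1 <= l <= r -> x \in W l j -> x \in Y l j -> False.
Proof.
move=> hl; have [du _ _ _] := petal_parts hl j.
exact: (disjoint_union_nthF (a := 0) (b := 2) du).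
Qed.

Lemma U_notin_Y l j x : 1 <= l <= r -> x \in U l j -> x \in Y l j -> False.
Proof.
move=> hl; have [du _ _ _] := petal_parts hl j.
exact: (disjoint_union_nthF (a := 1) (b := 2) du).
Qed.

Local Notation cross l j := (cross_edges A (W l j) (V l.+1)).
Local Notation match_WU l j := (induced A (W l j :|: U l j)).
Local Notation match_Y l j := (induced A (Y l j)).

Definition petal_edge l j x y := [|| cross l j x y, match_WU l j x y | match_Y l j x y].

Lemma A_irr : irreflexive A.
Proof. by move=> x; apply/negbTE; apply: contra (G_irr x); apply: A_sub. Qed.

Lemma induced_sym S : symmetric (induced A S).
Proof. by move=> x y; rewrite /induced A_sym (andbC (x \in S)). Qed.

Lemma cross_sym l j : symmetric (cross l j).
Proof. by move=> x y; rewrite /cross_edges induced_sym (andbC (x \in _)). Qed.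

Lemma induced_A S x y : induced A S x y -> A x y.
Proof. by case/and3P. Qed.

Lemma induced_mem S x y : induced A S x y -> x \in S /\ y \in S.
Proof. by case/and3P. Qed.

Lemma cross_A l j x y : cross l j x y -> A x y.
Proof. by case/andP => /induced_A. Qed.

Lemma petal_edge_A l j x y : petal_edge l j x y -> A x y.
Proof. by case/or3P => [/cross_A|/induced_A|/induced_A]. Qed.

Lemma petal_edge_sym l j : symmetric (petal_edge l j).
Proof.
by move=> x y; rewrite /petal_edge cross_sym (induced_sym _ x) (induced_sym (Y l j) x).
Qed.

Section Level.
Variables (l : nat) (j : 'I_3).
Hypothesis hl : 1 <= l <= r.

Lemma cross_loc x y : cross l j x y ->
  (x \in W l j /\ y \in V l.+1) \/ (x \in V l.+1 /\ y \in W l j).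
Proof.
by have [_ [/(_ x y) + _] _ _] := petal_parts hl j => h /h /orP[]/andP[]; [left | right].
Qed.

Lemma WU_loc x y : match_WU l j x y ->
  (x \in W l j /\ y \in U l j) \/ (x \in U l j /\ y \in W l j).
Proof.
by have [_ _ [/(_ x y) + _] _] := petal_parts hl j => h /h /orP[]/andP[]; [left | right].
Qed.

Lemma cross_uniq x y z : cross l j x y -> cross l j x z -> y = z.
Proof. by have [_ pm _ _] := petal_parts hl j; apply: pm_between_uniq pm. Qed.

Lemma WU_uniq x y z : match_WU l j x y -> match_WU l j x z -> y = z.
Proof. by have [_ _ pm _] := petal_parts hl j; apply: pm_between_uniq pm. Qed.

Lemma Y_uniq x y z : match_Y l j x y -> match_Y l j x z -> y = z.
Proof. by have [_ _ _ pm] := petal_parts hl j; apply: pm_of_uniq pm. Qed.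

Lemma WU_ex x : x \in W l j :|: U l j -> exists y, match_WU l j x y.
Proof. by have [_ _ pm _] := petal_parts hl j; apply: pm_between_ex pm. Qed.

Lemma Y_ex x : x \in Y l j -> exists y, match_Y l j x y.
Proof. by have [_ _ _ pm] := petal_parts hl j; apply: pm_of_ex pm. Qed.

Lemma WU_in_Vs x : x \in W l j :|: U l j -> x \in Vs l j.
Proof. by rewrite in_setU => /orP[/(W_in_Vs hl)|/(U_in_Vs hl)]. Qed.

Lemma cross_partner y : y \in V l.+1 -> exists2 w, cross l j y w & w \in W l j.
Proof.
move=> yt; have [_ pm _ _] := petal_parts hl j.
have yWt : y \in W l j :|: V l.+1 by rewrite in_setU yt orbT.
have [w yw] := pm_between_ex pm yWt.
exists w => //; case: (cross_loc yw) => [[yW _]|[_ //]].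
by case: (Vs_notin_Vnext hl (W_in_Vs hl yW) yt).
Qed.

End Level.

Lemma level_eq i l x y : 1 <= i <= r -> 1 <= l <= r ->
  x \in V i -> (x \in V i.+1 -> False) -> y \in V i -> x \in V l ->
  ~ (x \in V l.+1 /\ y \in V l.+1) -> i = l.
Proof.
move=> hi hl xi xi' yi xl nb; case: (ltngtP i l) => // [il|li]; exfalso.
  by apply: xi'; apply: (V_decr _ _ xl); lia.
by apply: nb; split; [apply: (V_decr _ _ xi) | apply: (V_decr _ _ yi)]; lia.
Qed.

Lemma level_edge_cases l x y : 1 <= l <= r -> A x y -> x \in V l -> y \in V l ->
  ~ (x \in V l.+1 /\ y \in V l.+1) ->
  [\/ exists j k, x = v l j /\ y = v l k,
      exists j, (x = v l j /\ y \in Vs l j) \/ (y = v l j /\ x \in Vs l j)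
    | exists j, petal_edge l j x y].
Proof.
move=> hl Axy xl yl nb.
have nb' : ~ (y \in V l.+1 /\ x \in V l.+1) by case=> *; apply: nb.
case: (A_edges Axy) => [[i [j [k [hi ex ey]]]] | [i [j [hi h]]] | [i [j [hi h]]] | /and3P[_ xt yt]].
- have ei : i = l.
    subst; exact: (level_eq hi hl (R_in_V hi (mem_Rset _ _)) (R_notin_Vnext hi (mem_Rset _ _))
      (R_in_V hi (mem_Rset _ _)) xl nb).
  by subst; constructor 1; exists j, k.
- have ei : i = l.
    case: h => -[ex ys]; subst.
      exact: (level_eq hi hl (R_in_V hi (mem_Rset _ _)) (R_notin_Vnext hi (mem_Rset _ _))
        (Vs_in_V hi ys) xl nb).
    exact: (level_eq hi hl (Vs_in_V hi ys) (Vs_notin_Vnext hi ys)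
      (R_in_V hi (mem_Rset _ _)) xl nb).
  by subst; constructor 2; exists j.
- have petal_level z z' : z \in Vs i j -> z' \in V i -> z \in V l ->
      ~ (z \in V l.+1 /\ z' \in V l.+1) -> i = l.
    by move=> zs; apply: (level_eq hi hl (Vs_in_V hi zs) (Vs_notin_Vnext hi zs)).
  have Vnext_V z : z \in V i.+1 -> z \in V i by apply: V_decr; lia.
  have ei : i = l.
    case: h => [h|/induced_mem[xs ys]|/induced_mem[xs ys]].
    + case: (cross_loc hi h) => -[xW yt].
        exact: (petal_level _ _ (W_in_Vs hi xW) (Vnext_V _ yt) xl nb).
      exact: (petal_level _ _ (W_in_Vs hi yt) (Vnext_V _ xW) yl nb').
    + exact: (petal_level _ _ (WU_in_Vs hi xs) (Vs_in_V hi (WU_in_Vs hi ys)) xl nb).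
    + exact: (petal_level _ _ (Y_in_Vs hi xs) (Vs_in_V hi (Y_in_Vs hi ys)) xl nb).
  by subst; constructor 3; exists j; apply/or3P.
- by case: nb; split; apply: (V_decr _ _ (_ : _ \in V r.+1)); rewrite ?xt ?yt //; lia.
Qed.

Lemma centre_adj l j y : 1 <= l <= r -> y \in Vs l j -> A (v l j) y.
Proof. by move=> hl; rewrite -(centre_nbhd hl j) !inE => /andP[_ /andP[]]. Qed.

Lemma centre_nbr l j y : 1 <= l <= r -> y \in V l -> A (v l j) y ->
  (exists k, y = v l k) \/ y \in Vs l j.
Proof.
move=> hl yl Ay; case: (boolP (y \in Rset v l)) => [/RsetP|yR]; first by left.
by right; rewrite -(centre_nbhd hl j) in_setD yR inE yl Ay.
Qed.

Lemma petal_edge_mem l j x y : 1 <= l <= r -> petal_edge l j x y -> x \in Vs l j \/ x \in V l.+1.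
Proof.
move=> hl /or3P[/(cross_loc hl)[[/(W_in_Vs hl) ? _]|[? _]] |
  /induced_mem[/(WU_in_Vs hl) ? _] | /induced_mem[/(Y_in_Vs hl) ? _]]; by [left | right].
Qed.

Lemma petal_edge_mem_r l j x y : 1 <= l <= r -> petal_edge l j x y -> y \in Vs l j \/ y \in V l.+1.
Proof. by rewrite petal_edge_sym; apply: petal_edge_mem. Qed.

Lemma petal_nbr l j x y : 1 <= l <= r -> x \in Vs l j -> y \in V l -> A x y ->
  y = v l j \/ petal_edge l j x y.
Proof.
move=> hl xs yl Axy; have xt := Vs_notin_Vnext hl xs.
case: (level_edge_cases hl Axy (Vs_in_V hl xs) yl (fun h => xt h.1)).
- by move=> [j1 [k [ex _]]]; subst x; case: (R_notin_Vs hl (mem_Rset _ _) xs).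
- move=> [j1 [[ex _]|[-> xs1]]]; last by rewrite (Vs_index_uniq hl xs1 xs); left.
  by subst x; case: (R_notin_Vs hl (mem_Rset _ _) xs).
- move=> [j1 p]; case: (petal_edge_mem hl p) => [xs1|/xt//].
  by rewrite -(Vs_index_uniq hl xs1 xs); right.
Qed.

Lemma petal_edge_top l j x y : 1 <= l <= r -> x \in V l.+1 -> petal_edge l j x y -> cross l j x y.
Proof.
move=> hl xt /or3P[//|/induced_mem[/(WU_in_Vs hl) xs _]|/induced_mem[/(Y_in_Vs hl) xs _]];
  by case: (Vs_notin_Vnext hl xs xt).
Qed.

Lemma top_nbr l x y : 1 <= l <= r -> x \in V l.+1 -> y \in V l -> (y \in V l.+1 -> False) ->
  A x y -> exists j, cross l j x y.
Proof.
move=> hl xt yl yt Axy; have xl : x \in V l by apply: (V_decr _ _ xt); lia.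
case: (level_edge_cases hl Axy xl yl (fun h => yt h.2)).
- by move=> [j1 [k [ex _]]]; subst x; case: (R_notin_Vnext hl (mem_Rset _ _) xt).
- move=> [j1 [[ex _]|[_ xs]]]; last by case: (Vs_notin_Vnext hl xs xt).
  by subst x; case: (R_notin_Vnext hl (mem_Rset _ _) xt).
- by move=> [j1 p]; exists j1; apply: petal_edge_top hl xt p.
Qed.

Lemma petal_edge_W l j x y : 1 <= l <= r -> x \in W l j -> y \in Vs l j ->
  petal_edge l j x y -> match_WU l j x y.
Proof.
move=> hl xW ys /or3P[c|//|/induced_mem[xY _]]; last by case: (W_notin_Y hl xW xY).
case: (cross_loc hl c) => [[_ yt]|[xt _]]; first by case: (Vs_notin_Vnext hl ys yt).
by case: (Vs_notin_Vnext hl (W_in_Vs hl xW) xt).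
Qed.

Lemma petal_edge_U l j x y : 1 <= l <= r -> x \in U l j -> petal_edge l j x y -> match_WU l j x y.
Proof.
move=> hl xU /or3P[c|//|/induced_mem[xY _]]; last by case: (U_notin_Y hl xU xY).
case: (cross_loc hl c) => [[xW _]|[xt _]]; first by case: (W_notin_U hl xW xU).
by case: (Vs_notin_Vnext hl (U_in_Vs hl xU) xt).
Qed.

Lemma petal_edge_Y l j x y : 1 <= l <= r -> x \in Y l j -> petal_edge l j x y -> match_Y l j x y.
Proof.
move=> hl xY /or3P[c|/induced_mem[xWU _]|//].
  case: (cross_loc hl c) => [[xW _]|[xt _]]; first by case: (W_notin_Y hl xW xY).
  by case: (Vs_notin_Vnext hl (Y_in_Vs hl xY) xt).
by move: xWU; rewrite in_setU => /orP[xW|xU];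
  [case: (W_notin_Y hl xW xY) | case: (U_notin_Y hl xU xY)].
Qed.

Lemma petal_edge_inner_uniq l j c b d : 1 <= l <= r -> b \in Vs l j -> d \in Vs l j ->
  petal_edge l j c b -> petal_edge l j c d -> b = d.
Proof.
move=> hl bs ds pb pd; case: (petal_edge_mem hl pb) => [|ct].
  rewrite petal_WUY // !inE -orbA => /or3P[cW|cU|cY].
  - exact: (WU_uniq hl (petal_edge_W hl cW bs pb) (petal_edge_W hl cW ds pd)).
  - exact: (WU_uniq hl (petal_edge_U hl cU pb) (petal_edge_U hl cU pd)).
  - exact: (Y_uniq hl (petal_edge_Y hl cY pb) (petal_edge_Y hl cY pd)).
exact: (cross_uniq hl (petal_edge_top hl ct pb) (petal_edge_top hl ct pd)).
Qed.

Lemma petal_edge_two l j a b d : 1 <= l <= r -> a \in Vs l j ->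
  petal_edge l j a b -> petal_edge l j a d -> b != d ->
  (match_WU l j a b /\ b \in U l j) \/ (match_WU l j a d /\ d \in U l j).
Proof.
move=> hl; rewrite petal_WUY // !inE -orbA => /or3P[aW|aU|aY] pb pd bd.
- have WU_U z : match_WU l j a z -> z \in U l j.
    by case/(WU_loc hl) => [[_ //] | [aU _]]; case: (W_notin_U hl aW aU).
  have not_Y z : match_Y l j a z -> False by case/induced_mem => aY _; case: (W_notin_Y hl aW aY).
  case/or3P: pb => [cb|wb|/not_Y//]; case/or3P: pd => [cd|wd|/not_Y//].
  + by rewrite (cross_uniq hl cb cd) eqxx in bd.
  + by right; split => //; apply: WU_U.
  + by left; split => //; apply: WU_U.
  + by rewrite (WU_uniq hl wb wd) eqxx in bd.
- by rewrite (WU_uniq hl (petal_edge_U hl aU pb) (petal_edge_U hl aU pd)) eqxx in bd.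
- by rewrite (Y_uniq hl (petal_edge_Y hl aY pb) (petal_edge_Y hl aY pd)) eqxx in bd.
Qed.

Lemma petal_partner l j x : 1 <= l <= r -> x \in Vs l j ->
  exists2 p, petal_edge l j x p & p \in Vs l j.
Proof.
move=> hl; rewrite {1}petal_WUY // in_setU => /orP[xWU|xY].
  have [p xp] := WU_ex hl xWU; exists p; first by rewrite /petal_edge xp orbT.
  exact: (WU_in_Vs hl (induced_mem xp).2).
have [p xp] := Y_ex hl xY; exists p; first by rewrite /petal_edge xp !orbT.
exact: (Y_in_Vs hl (induced_mem xp).2).
Qed.

(** * No 4-cycles *)

Lemma centre_common_nbr l j b c d : 1 <= l <= r -> b != d -> c != v l j ->
  b \in V l -> c \in V l -> d \in V l ->
  A (v l j) b -> A b c -> A c d -> A (v l j) d -> False.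
Proof.
move=> hl bd cj bl cl dl Ab Abc Acd Ad.
have centre_j k : A (v l j) (v l k) -> k != j by apply: contraTneq => ->; rewrite A_irr.
have centre_petal k z : z \in Vs l j -> A (v l k) c -> A c z -> k != j -> False.
  move=> zs Akc Acz kj; have Azc : A z c by rewrite A_sym.
  case: (petal_nbr hl zs cl Azc) => [ec|pc]; first by rewrite ec eqxx in cj.
  case: (centre_nbr hl cl Akc) => [[t ec]|cs].
    have cR : c \in Rset v l by rewrite ec mem_Rset.
    by case: (petal_edge_mem_r hl pc) => [/(R_notin_Vs hl cR)|/(R_notin_Vnext hl cR)].
  case: (petal_edge_mem_r hl pc) => [cs'|ct]; last exact: (Vs_notin_Vnext hl cs ct).
  by move: kj; rewrite (Vs_index_uniq hl cs cs') eqxx.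
case: (centre_nbr hl bl Ab) => [[k eb]|bs]; case: (centre_nbr hl dl Ad) => [[m ed]|ds].
- subst b d; have jk : j != k by rewrite eq_sym centre_j.
  have jm : j != m by rewrite eq_sym centre_j.
  have km : k != m by apply: contraNneq bd => ->.
  case: (centre_nbr hl cl Abc) => [[t ec]|cs].
    by case: (ord3_cover t jk jm km) => et; subst; rewrite ?eqxx ?A_irr in cj Abc Acd.
  have Amc : A (v l m) c by rewrite A_sym.
  case: (centre_nbr hl cl Amc) => [[t ec]|cs'].
    by subst c; case: (R_notin_Vs hl (mem_Rset _ _) cs).
  by move: km; rewrite (Vs_index_uniq hl cs cs') eqxx.
- by subst b; apply: (centre_petal k d ds Abc Acd (centre_j _ Ab)).
- by subst d; apply: (centre_petal m b bs _ _ (centre_j _ Ad)); rewrite A_sym.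
- case: (petal_nbr hl bs cl Abc) => [ec|pb]; first by rewrite ec eqxx in cj.
  have Adc : A d c by rewrite A_sym.
  case: (petal_nbr hl ds cl Adc) => [ec|pd]; first by rewrite ec eqxx in cj.
  rewrite petal_edge_sym in pb; rewrite petal_edge_sym in pd.
  by move: bd; rewrite (petal_edge_inner_uniq hl bs ds pb pd) eqxx.
Qed.

Lemma C4_centre l j a b c d : 1 <= l <= r -> uniq [:: a; b; c; d] ->
  A a b -> A b c -> A c d -> A d a -> b \in V l -> c \in V l -> d \in V l -> a = v l j -> False.
Proof.
move=> hl; rewrite uniq4 => /and5P[_ ac _ _ /andP[bd _]] Aab Abc Acd Ada bl cl dl ea; subst a.
by apply: (centre_common_nbr hl bd _ bl cl dl Aab Abc Acd); rewrite 1?A_sym // eq_sym.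
Qed.

Lemma C4_petal l j a b c d : 1 <= l <= r -> uniq [:: a; b; c; d] ->
  A a b -> A b c -> A c d -> A d a -> b \in V l -> c \in V l -> d \in V l -> a \in Vs l j -> False.
Proof.
move=> hl u Aab Abc Acd Ada bl cl dl as_; have al := Vs_in_V hl as_.
have u1 := uniq_rot4 u; have u2 := uniq_rot4 u1; have u3 := uniq_rot4 u2.
case: (petal_nbr hl as_ bl Aab) => [eb|pb].
  exact: (C4_centre hl u1 Abc Acd Ada Aab cl dl al eb).
have Aad : A a d by rewrite A_sym.
case: (petal_nbr hl as_ dl Aad) => [ed|pd].
  exact: (C4_centre hl u3 Ada Aab Abc Acd al bl cl ed).
have centre_c : c = v l j -> False := C4_centre hl u2 Acd Ada Aab Abc dl al bl.
move: u; rewrite uniq4 => /and5P[_ ac _ _ /andP[bd _]].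
have U_nbr z : z \in U l j -> match_WU l j a z -> A z c -> False.
  move=> zU aWU Azc; have zaWU : match_WU l j z a by rewrite induced_sym.
  case: (petal_nbr hl (U_in_Vs hl zU) cl Azc) => [/centre_c//|pc].
  by move: ac; rewrite (WU_uniq hl (petal_edge_U hl zU pc) zaWU) eqxx.
(* Of the two partners of a, one lies in U, whose only neighbours are a and the centre. *)
case: (petal_edge_two hl as_ pb pd bd) => -[aWU zU]; apply: (U_nbr _ zU aWU) => //.
by rewrite A_sym.
Qed.

Lemma C4_in_Vnext l a b c d : 1 <= l <= r -> uniq [:: a; b; c; d] ->
  A a b -> A b c -> A c d -> A d a -> a \in V l -> b \in V l -> c \in V l -> d \in V l ->
  a \in V l.+1.
Proof.
move=> hl u Aab Abc Acd Ada al bl cl dl.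
case: (V_level_cases hl al) => [//|/RsetP[j ea]|[j as_]]; exfalso.
  exact: (C4_centre hl u Aab Abc Acd Ada bl cl dl ea).
exact: (C4_petal hl u Aab Abc Acd Ada bl cl dl as_).
Qed.

Lemma C4_free_V1 : ~ has_C4 (induced A (V 1)).
Proof.
have [_ top_C4_free _] := top_saturated.
apply: (downward_ind (P := fun l => ~ has_C4 (induced A (V l))) top_C4_free).
move=> l hl IH [a [b [c [d [u]]]]].
move=> /and3P[Aab al bl] /and3P[Abc _ cl] /and3P[Acd _ dl] /and3P[Ada _ _].
have u1 := uniq_rot4 u; have u2 := uniq_rot4 u1; have u3 := uniq_rot4 u2.
have aT := C4_in_Vnext hl u Aab Abc Acd Ada al bl cl dl.
have bT := C4_in_Vnext hl u1 Abc Acd Ada Aab bl cl dl al.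
have cT := C4_in_Vnext hl u2 Acd Ada Aab Abc cl dl al bl.
have dT := C4_in_Vnext hl u3 Ada Aab Abc Acd dl al bl cl.
by apply: IH; exists a, b, c, d; split; rewrite // /induced ?Aab ?Abc ?Acd ?Ada ?aT ?bT ?cT ?dT.
Qed.

Lemma flower_C4_free : ~ has_C4 A.
Proof.
move=> C4A; apply: C4_free_V1; apply: has_C4_sub C4A => x y Axy.
by rewrite /induced V1_full !inE Axy.
Qed.

(** * Saturation *)

Lemma A_neq x y : A x y -> x != y.
Proof. by apply: contraTneq => ->; rewrite A_irr. Qed.

Lemma centre_neq l j k : 1 <= l <= r -> j != k -> v l j != v l k.
Proof. by move=> hl /(R_triangle hl) /A_neq. Qed.

Lemma centre_neq_Vs l j k z : 1 <= l <= r -> z \in Vs l k -> v l j != z.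
Proof. by move=> hl zs; apply/eqP => e; apply: (R_notin_Vs hl _ zs); rewrite -e mem_Rset. Qed.

Lemma centre_neq_Vnext l j z : 1 <= l <= r -> z \in V l.+1 -> v l j != z.
Proof. by move=> hl zt; apply/eqP => e; apply: (R_notin_Vnext hl _ zt); rewrite -e mem_Rset. Qed.

Lemma Vs_neq_Vnext l j w z : 1 <= l <= r -> w \in Vs l j -> z \in V l.+1 -> w != z.
Proof. by move=> hl ws zt; apply/eqP => e; apply: (Vs_notin_Vnext hl ws); rewrite e. Qed.

Lemma path3_from_centre l j y : 1 <= l <= r -> y \in V l -> v l j != y -> ~~ A (v l j) y ->
  exists a b, [/\ A (v l j) a, A a b, A b y & uniq [:: v l j; a; b; y]].
Proof.
move=> hl yl xy nA; case: (V_level_cases hl yl) => [yt|/RsetP[k ey]|[k ys]].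
- have [w yw wW] := cross_partner j hl yt.
  have wWU : w \in W l j :|: U l j by rewrite in_setU wW.
  have [u wu] := WU_ex hl wWU.
  have uU : u \in U l j by case: (WU_loc hl wu) => [[_ //] | [wU _]]; case: (W_notin_U hl wW wU).
  have us := U_in_Vs hl uU; have ws := W_in_Vs hl wW.
  exists u, w; split; [exact: centre_adj | rewrite A_sym; exact: induced_A wu |
    rewrite A_sym; exact: cross_A yw |].
  have uw : u != w by apply/eqP => e; subst u; case: (W_notin_U hl wW uU).
  by rewrite uniq4 !(centre_neq_Vs _ hl us) !(centre_neq_Vs _ hl ws) xy uw
    (Vs_neq_Vnext hl us yt) (Vs_neq_Vnext hl ws yt).
- subst y; have jk : j != k by apply: contraNneq xy => ->.
  by rewrite (R_triangle hl jk) in nA.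
- have jk : j != k by apply: contraNneq nA => ->; rewrite centre_adj.
  have [m [mj mk]] := ord3_third jk; have jm : j != m by rewrite eq_sym.
  exists (v l m), (v l k); split; [exact: R_triangle | exact: R_triangle | exact: centre_adj |].
  by rewrite uniq4 !centre_neq // !(centre_neq_Vs _ hl ys).
Qed.

Lemma path3_from_petal l j x y : 1 <= l <= r -> x \in Vs l j -> y \in V l -> x != y ->
  ~~ A x y -> exists a b, [/\ A x a, A a b, A b y & uniq [:: x; a; b; y]].
Proof.
move=> hl xs yl xy nA; have Axj : A x (v l j) by rewrite A_sym centre_adj.
have xc m : x != v l m by rewrite eq_sym (centre_neq_Vs _ hl xs).
case: (V_level_cases hl yl) => [yt|/RsetP[k ey]|[k ys]].
- have [w yw wW] := cross_partner j hl yt; have ws := W_in_Vs hl wW.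
  have xw : x != w by apply: contraNneq nA => ->; rewrite A_sym (cross_A yw).
  exists (v l j), w; split; [done | exact: centre_adj | rewrite A_sym; exact: cross_A yw |].
  by rewrite uniq4 xc xw xy (centre_neq_Vs _ hl ws) (centre_neq_Vnext _ hl yt)
    (Vs_neq_Vnext hl ws yt).
- subst y; have jk : j != k by apply: contraNneq nA => <-.
  have [m [mj mk]] := ord3_third jk; have jm : j != m by rewrite eq_sym.
  exists (v l j), (v l m); split; [done | exact: R_triangle | exact: R_triangle |].
  by rewrite uniq4 !xc !centre_neq.
- have yc m : v l m != y := centre_neq_Vs m hl ys.
  case: (eqVneq j k) => [ejk|jk]; last first.
    exists (v l j), (v l k); split; [done | exact: R_triangle | exact: centre_adj |].
    by rewrite uniq4 !xc xy !yc centre_neq.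
  subst k; have [p xp ps] := petal_partner hl xs.
  have xp' : x != p by apply: A_neq (petal_edge_A xp).
  have py : p != y by apply: contraNneq nA => <-; apply: petal_edge_A xp.
  exists p, (v l j); split; [exact: petal_edge_A xp | rewrite A_sym; exact: centre_adj |
    exact: centre_adj |].
  by rewrite uniq4 xp' xc xy py yc eq_sym (centre_neq_Vs _ hl ps).
Qed.

Lemma path3_from_level l x y : 1 <= l <= r -> x \in V l -> (x \in V l.+1 -> False) ->
  y \in V l -> x != y -> ~~ A x y -> exists a b, [/\ A x a, A a b, A b y & uniq [:: x; a; b; y]].
Proof.
move=> hl xl xt yl; case: (V_level_cases hl xl) => [/xt//|/RsetP[j ->]|[j xs]].
  exact: path3_from_centre hl yl.
exact: path3_from_petal hl xs yl.
Qed.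

Lemma saturated_V1 x y : x \in V 1 -> y \in V 1 -> G x y -> ~~ A x y -> has_C4 (add_edge A x y).
Proof.
pose P l := forall x y, x \in V l -> y \in V l -> G x y -> ~~ A x y -> has_C4 (add_edge A x y).
apply: (downward_ind (P := P)) x y.
  move=> a b al bl Gab nAab; have [_ _ top_sat] := top_saturated.
  have nA' : ~~ induced A (V r.+1) a b by apply: contra nAab => /induced_A.
  apply: has_C4_sub (top_sat a b (introT and3P (And3 Gab al bl)) nA') => p q.
  by rewrite /add_edge => /orP[/orP[/induced_A -> //|->]|->]; rewrite ?orbT.
move=> l hl IH a b al bl Gab nAab.
have ab : a != b by apply: contraTneq Gab => ->; apply: G_irr.
have [aT|aN] := boolP (a \in V l.+1).
  have [bT|bN] := boolP (b \in V l.+1); first exact: IH.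
  have nAba : ~~ A b a by rewrite A_sym.
  have ba : b != a by rewrite eq_sym.
  have [p [q [Abp Apq Aqa u]]] := path3_from_level hl bl (negP bN) al ba nAba.
  exact: has_C4_sub (@add_edgeC _ A b a) (add_edge_C4 Abp Apq Aqa u).
have [p [q [Aap Apq Aqb u]]] := path3_from_level hl al (negP aN) bl ab nAab.
exact: add_edge_C4 Aap Apq Aqb u.
Qed.

Lemma flower_C4_saturated : C4_saturated_in G A.
Proof.
split=> [//|| x y]; first exact: flower_C4_free.
by apply: saturated_V1; rewrite V1_full inE.
Qed.

(** * Counting edges *)

Definition deg l x := #|[set y | induced A (V l) x y]|.
Definition arcs l := #|[set p : 'I_n * 'I_n | induced A (V l) p.1 p.2]|.

Lemma arcs_sum_deg l : arcs l = \sum_(x in V l) deg l x.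
Proof.
rewrite /arcs card_rel (bigID (mem (V l))) /= [X in _ + X]big1 ?addn0 // => x /negbTE xl.
by apply/eqP; rewrite cards_eq0; apply/eqP/setP => y; rewrite !inE /induced xl andbF.
Qed.

Lemma centre_inj l : 1 <= l <= r -> injective (v l).
Proof. by move=> hl j k e; case: (eqVneq j k) => // /(centre_neq hl); rewrite e eqxx. Qed.

Lemma card_Rset l : 1 <= l <= r -> #|Rset v l| = 3.
Proof.
move=> hl; have -> : Rset v l = [set v l j | j in 'I_3].
  by apply/setP => y; apply/idP/imsetP => [/RsetP[j ->]|[j _ ->]]; [exists j | exact: mem_Rset].
by rewrite card_imset ?card_ord //; apply: centre_inj.
Qed.

Lemma cross_top_W l j x y : 1 <= l <= r -> x \in V l.+1 -> cross l j x y -> y \in W l j.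
Proof.
move=> hl xt /(cross_loc hl)[[xW _]|[_ //]].
by case: (Vs_notin_Vnext hl (W_in_Vs hl xW) xt).
Qed.

Lemma top_nbhd l x : 1 <= l <= r -> x \in V l.+1 ->
  [set y | induced A (V l) x y] =
  [set y | induced A (V l.+1) x y] :|: \bigcup_(j : 'I_3) [set y | cross l j x y].
Proof.
move=> hl xt; have xl : x \in V l by apply: (V_decr _ _ xt); lia.
apply/setP => y; rewrite !inE; apply/idP/orP.
- case/and3P => Axy _ yl; have [yt|yN] := boolP (y \in V l.+1).
    by left; rewrite /induced Axy xt yt.
  have [j xy] := top_nbr hl xt yl (negP yN) Axy.
  by right; apply/bigcupP; exists j; rewrite ?inE.
- case=> [/and3P[Axy _ yt]|/bigcupP[j _]]; rewrite /induced.
    by rewrite Axy xl (V_decr _ _ yt) //; lia.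
  rewrite inE => xy; have ys := W_in_Vs hl (cross_top_W hl xt xy).
  by rewrite (cross_A xy) xl (Vs_in_V hl ys).
Qed.

Lemma deg_top l x : 1 <= l <= r -> x \in V l.+1 -> deg l x = deg l.+1 x + 3.
Proof.
move=> hl xt; have cross_Vs j y : cross l j x y -> y \in Vs l j.
  by move/(cross_top_W hl xt)/(W_in_Vs hl).
rewrite /deg (top_nbhd hl xt) cardsU_disjoint; last first.
  apply/disjoint_setsP => y; rewrite inE => /and3P[_ _ yt] /bigcupP[j _].
  by rewrite inE => /cross_Vs/(Vs_notin_Vnext hl); apply.
rewrite card_bigcup_disjoint => [|j k jk]; last first.
  apply/disjoint_setsP => y; rewrite !inE => /cross_Vs yj /cross_Vs yk.
  by move: jk; rewrite (Vs_index_uniq hl yj yk) eqxx.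
congr (_ + _); rewrite (eq_bigr (fun _ => 1)) ?sum_nat_const ?card_ord // => j _.
have [_ [_ card1] _ _] := petal_parts hl j.
by rewrite card1 // in_setU xt orbT.
Qed.

Lemma deg_centre l j : 1 <= l <= r -> deg l (v l j) = 2 + #|Vs l j|.
Proof.
move=> hl; rewrite /deg; set S := [set y | induced A (V l) (v l j) y].
have vl : v l j \in V l by apply: R_in_V (mem_Rset _ _).
rewrite -(cardsID (Rset v l) S); congr (_ + _); last first.
  by rewrite -(centre_nbhd hl j); congr #|_ :\: _|; apply/setP => y; rewrite !inE /induced vl andbC.
have -> : S :&: Rset v l = Rset v l :\ v l j.
  apply/setP => y; rewrite in_setI in_setD1 [y \in S]inE /induced vl /=.
  case yR: (y \in Rset v l); rewrite ?andbF // !andbT.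
  have [k ek] := RsetP yR; subst y; rewrite (R_in_V hl yR) andbT.
  case: (eqVneq k j) => [->|kj]; first by rewrite eqxx A_irr.
  have jk : j != k by rewrite eq_sym.
  by rewrite (R_triangle hl jk) (centre_neq hl kj).
have := cardsD1 (v l j) (Rset v l).
by rewrite mem_Rset card_Rset // => /eqP; rewrite eqSS => /eqP <-.
Qed.

Lemma deg_petal l j x : 1 <= l <= r -> x \in Vs l j ->
  deg l x = (#|[set y | petal_edge l j x y]|).+1.
Proof.
move=> hl xs; have xl := Vs_in_V hl xs; rewrite /deg.
have -> : [set y | induced A (V l) x y] = v l j |: [set y | petal_edge l j x y].
  apply/setP => y; rewrite in_setU1 !inE /induced xl /=; apply/idP/idP.
    by case/andP=> Axy yl; case: (petal_nbr hl xs yl Axy) => [->|->]; rewrite ?eqxx ?orbT.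
  case/orP => [/eqP->|pxy]; first by rewrite A_sym centre_adj ?(R_in_V hl (mem_Rset _ _)).
  rewrite (petal_edge_A pxy); case: (petal_edge_mem_r hl pxy) => [/(Vs_in_V hl)//|yt].
  by apply: (V_decr _ _ yt); lia.
have vj : v l j \notin [set y | petal_edge l j x y].
  rewrite inE; apply/negP => pxj; have vR := mem_Rset l j.
  by case: (petal_edge_mem_r hl pxj) => [/(R_notin_Vs hl vR)|/(R_notin_Vnext hl vR)].
by rewrite cardsU1 vj.
Qed.

Lemma deg_W l j x : 1 <= l <= r -> x \in W l j -> deg l x = 3.
Proof.
move=> hl xW; have [_ [_ cross1] [_ WU1] _] := petal_parts hl j.
rewrite (deg_petal hl (W_in_Vs hl xW)).
have -> : [set y | petal_edge l j x y] = [set y | match_WU l j x y] :|: [set y | cross l j x y].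
  apply/setP => y; rewrite !inE /petal_edge orbC -orbA; case xy: (match_Y l j x y) => //=.
  by case: (W_notin_Y hl xW (induced_mem xy).1).
rewrite cardsU_disjoint ?WU1 ?cross1 ?in_setU ?xW //.
apply/disjoint_setsP => y; rewrite !inE => /induced_mem[_ /(WU_in_Vs hl) ys] /(cross_loc hl).
case=> -[xt yt]; first by case: (Vs_notin_Vnext hl ys yt).
by case: (Vs_notin_Vnext hl (W_in_Vs hl xW) xt).
Qed.

Lemma deg_U l j x : 1 <= l <= r -> x \in U l j -> deg l x = 2.
Proof.
move=> hl xU; have [_ _ [_ WU1] _] := petal_parts hl j.
rewrite (deg_petal hl (U_in_Vs hl xU)).
have -> : [set y | petal_edge l j x y] = [set y | match_WU l j x y].
  apply/setP => y; rewrite !inE; apply/idP/idP => [/(petal_edge_U hl xU)//|xy].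
  by rewrite /petal_edge xy orbT.
by rewrite WU1 // in_setU xU orbT.
Qed.

Lemma deg_Y l j x : 1 <= l <= r -> x \in Y l j -> deg l x = 2.
Proof.
move=> hl xY; have [_ _ _ [_ Y1]] := petal_parts hl j.
rewrite (deg_petal hl (Y_in_Vs hl xY)).
have -> : [set y | petal_edge l j x y] = [set y | match_Y l j x y].
  apply/setP => y; rewrite !inE; apply/idP/idP => [/(petal_edge_Y hl xY)//|xy].
  by rewrite /petal_edge xy !orbT.
by rewrite Y1.
Qed.

Lemma petal_card_deg l j : 1 <= l <= r ->
  #|Vs l j| = #|W l j| + #|U l j| + #|Y l j| /\
  \sum_(x in Vs l j) deg l x = 3 * #|W l j| + 2 * #|U l j| + 2 * #|Y l j|.
Proof.
move=> hl; have dWU : [disjoint W l j & U l j] by apply/disjoint_setsP => x; apply: W_notin_U.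
have dWUY : [disjoint W l j :|: U l j & Y l j].
  by apply/disjoint_setsP => x; rewrite in_setU => /orP[/(W_notin_Y hl)|/(U_notin_Y hl)].
rewrite petal_WUY // !cardsU_disjoint // !big_setU_disjoint //; split=> //.
rewrite (eq_bigr (fun _ => 3)) => [|x]; last exact: deg_W.
rewrite [X in _ + X + _](eq_bigr (fun _ => 2)) => [|x]; last exact: deg_U.
rewrite [X in _ + X](eq_bigr (fun _ => 2)) => [|x]; last exact: deg_Y.
by rewrite !sum_nat_const !(mulnC 3) !(mulnC 2).
Qed.

Lemma card_W l j : 1 <= l <= r -> #|W l j| = #|V l.+1|.
Proof.
move=> hl; have [_ pm _ _] := petal_parts hl j; apply: (pm_between_card (cross_sym l j) pm).
by apply/disjoint_setsP => z /(W_in_Vs hl); apply: Vs_notin_Vnext.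
Qed.

Lemma card_U l j : 1 <= l <= r -> #|U l j| = #|W l j|.
Proof.
move=> hl; have [_ _ pm _] := petal_parts hl j; apply/esym/(pm_between_card (induced_sym _) pm).
by apply/disjoint_setsP => x; apply: W_notin_U.
Qed.

(* Stated with [+ 1] to avoid truncated subtraction. *)
Lemma star_deg_sum l j : 1 <= l <= r ->
  \sum_(x in v l j |: Vs l j) deg l x + 1 = 3 * #|v l j |: Vs l j| + #|V l.+1|.
Proof.
move=> hl; have vs : v l j \notin Vs l j by apply/negP/(R_notin_Vs hl (mem_Rset _ _)).
have [cVs sVs] := petal_card_deg j hl.
rewrite big_setU1 // cardsU1 vs add1n deg_centre // sVs cVs card_U // card_W //=; lia.
Qed.

Lemma V_level_stars l : 1 <= l <= r ->
  V l = V l.+1 :|: \bigcup_(j : 'I_3) (v l j |: Vs l j).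
Proof.
move=> hl; apply/setP => z; rewrite in_setU; apply/idP/orP.
  case/(V_level_cases hl) => [|/RsetP[j ->]|[j zs]]; [by left | |]; right; apply/bigcupP;
    by exists j; rewrite ?inE ?eqxx ?zs ?orbT.
case=> [zt|/bigcupP[j _]]; first by apply: (V_decr _ _ zt); lia.
by rewrite !inE => /orP[/eqP->|/(Vs_in_V hl)//]; apply: R_in_V hl (mem_Rset _ _).
Qed.

Lemma stars_disjoint l : 1 <= l <= r -> forall j k : 'I_3, j != k ->
  [disjoint v l j |: Vs l j & v l k |: Vs l k].
Proof.
move=> hl j k jk; apply/disjoint_setsP => z; rewrite !inE.
case/orP=> [/eqP->|zj] /orP[/eqP|zk].
- by apply/eqP; apply: centre_neq.
- exact: (R_notin_Vs hl (mem_Rset _ _) zk).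
- by move=> ez; subst z; case: (R_notin_Vs hl (mem_Rset _ _) zj).
- by move: jk; rewrite (Vs_index_uniq hl zj zk) eqxx.
Qed.

Lemma Vnext_stars_disjoint l : 1 <= l <= r ->
  [disjoint V l.+1 & \bigcup_(j : 'I_3) (v l j |: Vs l j)].
Proof.
move=> hl; apply/bigcup_disjointP => j _; apply/disjoint_setsP => z zt; rewrite !inE.
case/orP=> [/eqP ez|zs]; last exact: (Vs_notin_Vnext hl zs zt).
by subst z; case: (R_notin_Vnext hl (mem_Rset _ _) zt).
Qed.

Lemma sum_deg_Vnext l : 1 <= l <= r ->
  \sum_(x in V l.+1) deg l x = arcs l.+1 + 3 * #|V l.+1|.
Proof.
move=> hl; rewrite arcs_sum_deg (eq_bigr (fun x => deg l.+1 x + 3)) => [|x]; last exact: deg_top.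
by rewrite big_split /= sum_nat_const mulnC.
Qed.

Lemma sum_deg_stars l : 1 <= l <= r ->
  \sum_(x in \bigcup_(j : 'I_3) (v l j |: Vs l j)) deg l x + 3 =
  3 * #|\bigcup_(j : 'I_3) (v l j |: Vs l j)| + 3 * #|V l.+1|.
Proof.
move=> hl; have dis := stars_disjoint hl.
rewrite sum_bigcup_disjoint // card_bigcup_disjoint //.
transitivity (\sum_(j : 'I_3) (\sum_(x in v l j |: Vs l j) deg l x + 1)).
  by rewrite big_split /= sum_nat_const card_ord.
rewrite (eq_bigr _ (fun j _ => star_deg_sum j hl)) big_split /= -big_distrr.
by rewrite sum_nat_const card_ord.
Qed.

Lemma arcs_level l : 1 <= l <= r -> arcs l + 3 = arcs l.+1 + 3 * #|V l| + 3 * #|V l.+1|.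
Proof.
move=> hl; have dtop := Vnext_stars_disjoint hl.
have sum_split : \sum_(x in V l) deg l x =
    \sum_(x in V l.+1) deg l x + \sum_(x in \bigcup_(j : 'I_3) (v l j |: Vs l j)) deg l x.
  by rewrite {1}(V_level_stars hl) big_setU_disjoint.
have card_split : #|V l| = #|V l.+1| + #|\bigcup_(j : 'I_3) (v l j |: Vs l j)|.
  by rewrite {1}(V_level_stars hl) cardsU_disjoint.
by have := sum_deg_stars hl; have := sum_deg_Vnext hl; rewrite (arcs_sum_deg l); lia.
Qed.

Lemma arcs_telescope k : k <= r ->
  arcs 1 + 3 * k + 3 * #|V k.+1| = arcs k.+1 + 3 * #|V 1| + 6 * \sum_(2 <= i < k.+2) #|V i|.
Proof.
elim: k => [|k IH] hk; first by rewrite big_geq // !muln0 !addn0.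
have hk1 : 1 <= k.+1 <= r by lia.
have := arcs_level hk1; have := IH (ltnW hk).
rewrite (big_nat_recr k.+2) //=; lia.
Qed.

Lemma flower_arcs : (nedges A).*2 + 3 * r + 3 * #|V r.+1| =
  (nedges (induced A (V r.+1))).*2 + 3 * n + 6 * \sum_(2 <= i < r.+2) #|V i|.
Proof.
have arcsE l : (nedges (induced A (V l))).*2 = arcs l.
  by apply: nedges_double; [apply: induced_sym | move=> x; rewrite /induced A_irr].
have -> : nedges A = nedges (induced A (V 1)).
  by apply: eq_card => p; rewrite !inE /induced V1_full !inE !andbT.
rewrite !arcsE; have := arcs_telescope (leqnn r).
by rewrite V1_full cardsT card_ord; lia.
Qed.

End Flower.

Import GRing.Theory Num.Theory.
Local Open Scope ring_scope.

Theorem lemma6 (n : nat) (G A : rel 'I_n) (r : nat) (V : nat -> {set 'I_n}) :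
  simple_graph G ->
  (forall x y, A x y = A y x) ->
  (forall x y, A x y -> G x y) ->
  is_flower_with G A r V ->
  C4_saturated_in G A /\
  ((nedges A)%:R : rat) =
    (nedges (induced A (V r.+1)))%:R
    + (3%:R / 2%:R) * (n%:R - (#|V r.+1|)%:R - r%:R)
    + 3%:R * (\sum_(2 <= i < r.+2) #|V i|)%N%:R.
Proof.
move=> [_ G_irr] A_sym A_sub [v [Vs [W [U [Y [[V1 V_parts] R_tri centre [petals top] edges]]]]]].
split; first exact: flower_C4_saturated G_irr A_sym A_sub V1 V_parts R_tri centre petals top edges.
have := flower_arcs G_irr A_sym A_sub V1 V_parts R_tri centre petals edges.
move/(congr1 (fun m => m%:R : rat)); rewrite /= -!mul2n !natrD => count.
lra.
Qed.
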